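(* Let $G$ be a finite simple graph with vertices $v_1,\dots,v_n$ ($n\ge 1$) in which no vertex is adjacent to all other vertices, let $d\ge 1$ be an integer, let $G'$ be the graph constructed from $(G,d)$ as described in the context, and let $h=n(n+1)+d$. Suppose $S_1,\dots,S_h$ are pairwise disjoint vertex sets of $G'$, each inducing a connected subgraph, such that for all $i\ne j$ some edge of $G'$ joins a vertex of $S_i$ to a vertex of $S_j$. If $S_i$ contains a top vertex, then $D_i=\{v_j : m_j\in S_i\}$ is a dominating set of $G$.
   Context: A dominating set of $G$ is a set $D$ of vertices such that every vertex of $G$ either lies in $D$ or is adjacent to a vertex of $D$. Construction of $G'$ from a graph $G$ with vertices $v_1,\dots,v_n$ and an integer $d$: say $v_i$ dominates $v_j$ if $v_i=v_j$ or $v_iv_j$ is an edge of $G$. The vertex set of $G'$ consists of top vertices $t_1,\dots,t_d$, middle vertices $m_1,\dots,m_n$, and bottom vertices $b_{j,k}$ for $1\le j\le n$, $1\le k\le n+1$. Edges: the top vertices form a clique; the middle vertices form an independent set; the bottom vertices form a clique (of size $n(n+1)$); every top vertex is adjacent to every middle vertex; there are no top–bottom edges; middle vertex $m_i$ is adjacent to bottom vertex $b_{j,k}$ if and only if $v_i$ dominates $v_j$ in $G$. *)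

From mathcomp Require Import all_boot.
Set Implicit Arguments. Unset Strict Implicit. Unset Printing Implicit Defensive.

Definition simple_graph (T : finType) (e : rel T) : Prop :=
  symmetric e /\ irreflexive e.

Definition dominates (T : finType) (e : rel T) (u v : T) : bool :=
  (u == v) || e u v.

Definition dominating_set (T : finType) (e : rel T) (D : {set T}) : Prop :=
  forall v : T, exists2 u, u \in D & dominates e u v.

(* Vertices of G': top t_1..t_d, middle m_1..m_n, bottom b_{j,k} (j<n, k<n+1) *)
Definition Gpv (n d : nat) : finType :=
  (('I_d + 'I_n) + ('I_n * 'I_n.+1))%type.

Definition top (n d : nat) (i : 'I_d) : Gpv n d := inl (inl i).
Definition mid (n d : nat) (i : 'I_n) : Gpv n d := inl (inr i).
Arguments mid : clear implicits.
Definition bot (n d : nat) (j : 'I_n) (k : 'I_n.+1) : Gpv n d := inr (j, k).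

Definition is_top (n d : nat) (x : Gpv n d) : bool :=
  if x is inl (inl _) then true else false.

Definition Gp_adj (n d : nat) (e : rel 'I_n) : rel (Gpv n d) :=
  fun x y =>
    match x, y with
    | inl (inl t1), inl (inl t2) => t1 != t2
    | inl (inl _), inl (inr _) => true
    | inl (inr _), inl (inl _) => true
    | inl (inr _), inl (inr _) => false
    | inr b1, inr b2 => b1 != b2
    | inl (inl _), inr _ => false
    | inr _, inl (inl _) => false
    | inl (inr i), inr (j, _) => dominates e i j
    | inr (j, _), inl (inr i) => dominates e i j
    end.

Definition induced_connected (T : finType) (adj : rel T) (S : {set T}) : Prop :=
  forall x y, x \in S -> y \in S ->
    connect [rel a b | [&& a \in S, b \in S & adj a b]] x y.

Definition mid_set (n d : nat) (S : {set Gpv n d}) : {set 'I_n} :=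
  [set j : 'I_n | mid n d j \in S].
Arguments Gp_adj : clear implicits.
Arguments mid_set : clear implicits.

From mathcomp Require Import all_boot zify.

(* Pigeonhole: h = n(n+1)+d pairwise disjoint branch sets cannot all meet a
   set of fewer than h vertices.  Let S be a branch set without bottom
   vertices.  If some v_j were not dominated by D(S), no branch set could reach
   S from the column b_{j,*}, so every branch set would meet the complement of
   that column, which has only h - 1 vertices; hence D(S) dominates G.  As no
   vertex of G is universal, D(S) has two elements, and since the middle
   vertices are independent the connected set S then contains a top vertex.
   Finally, if the branch set of a top vertex t also contained a bottom vertex,
   every branch set would contain a top or bottom vertex other than t, and
   there are only h - 1 of those. *)

Set Implicit Arguments.
Unset Strict Implicit.
Unset Printing Implicit Defensive.

Lemma card_le_of_disjoint_meet (I T : finType) (S : I -> {set T}) (A : {set T}) :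
  (forall i j, i != j -> [disjoint S i & S j]) ->
  (forall i, exists x, x \in S i :&: A) -> #|I| <= #|A|.
Proof.
move=> disjS meetA; pose f i := xchoose (meetA i).
have fP i : f i \in S i :&: A := xchooseP (meetA i).
have f_inj : injective f.
  move=> i j fij; apply/eqP; apply: contraT => /disjS/disjointFr.
  have := fP i; have := fP j; rewrite !inE fij => /andP[fj _] /andP[fi _].
  by move=> /(_ _ fi); rewrite fj.
rewrite -(card_imset _ f_inj); apply: subset_leq_card.
by apply/subsetP => _ /imsetP[i _ ->]; have := fP i; rewrite inE => /andP[].
Qed.

Definition is_bot (n d : nat) (x : Gpv n d) : bool :=
  if x is inr _ then true else false.

Definition column (n d : nat) (j : 'I_n) : {set Gpv n d} :=
  [set bot d j k | k : 'I_n.+1].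
Arguments column {n} d j.

Definition middle (n d : nat) : {set Gpv n d} := [set mid n d i | i : 'I_n].
Arguments middle : clear implicits.

Lemma card_Gpv (n d : nat) : #|Gpv n d| = d + n + n * n.+1.
Proof. by rewrite !card_sum card_prod !card_ord. Qed.

Lemma card_column (n d : nat) (j : 'I_n) : #|column d j| = n.+1.
Proof. by rewrite card_imset ?card_ord // => k k' [->]. Qed.

Lemma card_middle (n d : nat) : #|middle n d| = n.
Proof. by rewrite card_imset ?card_ord // => k k' [->]. Qed.

Lemma in_column (n d : nat) (j : 'I_n) (x : Gpv n d) :
  (x \in column d j) = if x is inr b then b.1 == j else false.
Proof.
apply/imsetP/idP; first by case=> k _ ->; rewrite /= eqxx.
by case: x => [//|[a k] /= /eqP ->]; exists k.
Qed.

Lemma in_middle (n d : nat) (x : Gpv n d) :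
  (x \in middle n d) = if x is inl (inr _) then true else false.
Proof.
apply/imsetP/idP; first by case=> k _ ->.
by case: x => [[//|i]|//] _; exists i.
Qed.

Section BranchSets.

Variables (n d : nat) (e : rel 'I_n).
Variable S : 'I_(n * n.+1 + d) -> {set Gpv n d}.
Hypothesis S_disjoint : forall i j, i != j -> [disjoint S i & S j].
Hypothesis S_connected : forall i, induced_connected (Gp_adj n d e) (S i).
Hypothesis S_touch : forall i j, i != j ->
  exists x, exists y, [/\ x \in S i, y \in S j & Gp_adj n d e x y].

Lemma mem_S_eq i j x : x \in S i -> x \in S j -> i = j.
Proof.
move=> xi xj; apply/eqP; apply: contraT => /S_disjoint/disjointFr/(_ xi).
by rewrite xj.
Qed.

Lemma meet_off_column i0 j :
  (exists x, x \in S i0) -> (forall x, x \in S i0 -> ~~ is_bot x) ->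
  (forall u, u \in mid_set n d (S i0) -> ~~ dominates e u j) ->
  forall i, exists x, x \in S i :&: ~: column d j.
Proof.
move=> [x0 x0S] nobot undom i; have [->|ne] := eqVneq i i0.
  by exists x0; rewrite !inE x0S in_column; case: x0 x0S (nobot x0 x0S).
have [x [y [xS yS xy]]] := S_touch ne; exists x; rewrite !inE xS in_column.
case: x xS xy => [//|[a k]] /= _.
case: y yS (nobot y yS) => [[t|m]|b] //= yS _ mdom.
by apply/eqP => aj; move: (undom m); rewrite inE yS -aj mdom => /(_ isT).
Qed.

Lemma dominating_of_no_bot i0 :
  (exists x, x \in S i0) -> (forall x, x \in S i0 -> ~~ is_bot x) ->
  dominating_set e (mid_set n d (S i0)).
Proof.
move=> ne nobot j.
have [/exists_inP[u uD duj] | /exists_inPn undom] :=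
  boolP [exists u in mid_set n d (S i0), dominates e u j]; first by exists u.
have := card_le_of_disjoint_meet S_disjoint (meet_off_column ne nobot undom).
have := cardsC (column d j); rewrite card_ord card_Gpv card_column; lia.
Qed.

Hypothesis n_gt0 : 0 < n.
Hypothesis no_universal : forall v : 'I_n, exists u : 'I_n, u != v /\ ~~ e v u.

Lemma top_of_no_bot i0 :
  (exists x, x \in S i0) -> (forall x, x \in S i0 -> ~~ is_bot x) ->
  exists t, top n t \in S i0.
Proof.
move=> ne nobot; have dom := dominating_of_no_bot ne nobot.
have [u uD _] := dom (Ordinal n_gt0); have [w [wu /negbTE euw]] := no_universal u.
have [u' u'D du'w] := dom w.
have u'u : u' != u.
  by apply: contraTneq du'w => ->; rewrite /dominates eq_sym (negbTE wu) euw.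
rewrite !inE in uD u'D; have /connectP[p path_p last_p] := S_connected uD u'D.
case: p path_p last_p => [_ [eq_u'u] | y p /= /andP[/and3P[_ yS uy] _] _].
  by rewrite eq_u'u eqxx in u'u.
by case: y yS (nobot y yS) uy => [[t|m]|b] yS //= _ _; exists t.
Qed.

Lemma no_bot_of_top i t0 : top n t0 \in S i -> forall x, x \in S i -> ~~ is_bot x.
Proof.
move=> t0S x xS; apply/negP => xbot.
suff /(card_le_of_disjoint_meet S_disjoint) : forall i',
    exists y, y \in S i' :&: (~: middle n d :\ top n t0).
  have := cardsC (middle n d).
  rewrite (cardsD1 (top n t0) (~: _)) !inE in_middle card_ord card_Gpv card_middle /=.
  lia.
move=> i'; have [->|ne] := eqVneq i' i.
  by exists x; rewrite !inE xS in_middle; case: x xS xbot.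
have S_i'_inhabited : exists y, y \in S i' by have [y [_ [yS _ _]]] := S_touch ne; exists y.
have [/exists_inP[y yS ybot] | /exists_inPn nobot] := boolP [exists y in S i', is_bot y].
  by exists y; rewrite !inE yS in_middle; case: y yS ybot.
have [t tS] := top_of_no_bot S_i'_inhabited nobot; exists (top n t).
rewrite !inE tS in_middle andbT.
by apply: contra_neq ne => eq_t; apply: (mem_S_eq tS); rewrite eq_t.
Qed.

End BranchSets.

Theorem lemma5 (n d : nat) (e : rel 'I_n) :
  simple_graph e ->
  1 <= n ->
  (forall v : 'I_n, exists u : 'I_n, u != v /\ ~~ e v u) ->
  1 <= d ->
  forall S : 'I_(n * n.+1 + d) -> {set Gpv n d},
    (forall i j, i != j -> [disjoint S i & S j]) ->
    (forall i, induced_connected (Gp_adj n d e) (S i)) ->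
    (forall i j, i != j ->
       exists x, exists y, [/\ x \in S i, y \in S j & Gp_adj n d e x y]) ->
    forall i, (exists2 x, x \in S i & is_top x) ->
      dominating_set e (mid_set n d (S i)).
Proof.
move=> _ n_gt0 no_universal _ S disjS connS touchS i [[[t|//]|//] tS _].
apply: (dominating_of_no_bot disjS touchS); first by exists (top n t).
exact: (no_bot_of_top disjS connS touchS n_gt0 no_universal tS).
Qed.
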